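(* Let $A$, $\kappa$, $I_0=\{i_1<\dots<i_N\}$, $\tilde\phi$ be as in the context. Let $1\le n\le N$, let $k_1,\dots,k_n\in\{1,\dots,N\}$ be distinct rows and $j_1,\dots,j_n\in[M]\setminus I_0$ distinct non-pivot columns with $a_{k_r,j_r}\ne0$ for all $r$. Let $J=(I_0\setminus\{i_{k_1},\dots,i_{k_n}\})\cup\{j_1,\dots,j_n\}$. Then $$\Big|\prod_{r=1}^n a_{k_r,j_r}\Big|\frac{E_J}{E_{I_0}}=\Big|\prod_{1\le r<r'\le n}C_{r,r'}\Big|\exp\Big(\sum_{r=1}^n\tilde\phi_{(k_r,j_r)}\Big),\qquad C_{r,r'}=\frac{(\kappa_{i_{k_r}}-\kappa_{i_{k_{r'}}})(\kappa_{j_r}-\kappa_{j_{r'}})}{(\kappa_{i_{k_r}}-\kappa_{j_{r'}})(\kappa_{j_r}-\kappa_{i_{k_{r'}}})}.$$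
   Context: $\kappa_1<\dots<\kappa_M$ are real; $\xi_j=\kappa_jx+\kappa_j^2y+\kappa_j^3t$; for $I=\{i_1<\dots<i_N\}$, $E_I=\prod_{a<b}(\kappa_{i_b}-\kappa_{i_a})\exp(\sum_a\xi_{i_a})$ (indices listed increasingly). $A=(a_{k,j})$ is a real $N\times M$ rank-$N$ matrix in reduced row echelon form with pivot columns $I_0=\{i_1<\dots<i_N\}$ (pivot of row $k$ in column $i_k$). For each row $k$ and each non-pivot column $j$ with $a_{k,j}\ne0$, define $\phi_{(k,j)}=\xi_j-\xi_{i_k}$, $e^{\phi^0_{(k,j)}}=|a_{k,j}|\prod_{m\ne k}|\kappa_{i_m}-\kappa_j|/\prod_{m\ne k}|\kappa_{i_m}-\kappa_{i_k}|$, and $\tilde\phi_{(k,j)}=\phi_{(k,j)}+\phi^0_{(k,j)}$. *)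

From HB Require Import structures.
From mathcomp Require Import all_boot all_order all_algebra.
From mathcomp Require Import all_classical all_reals all_analysis.
Set Implicit Arguments. Unset Strict Implicit. Unset Printing Implicit Defensive.
Import Order.TTheory GRing.Theory Num.Theory.
Local Open Scope ring_scope.

Section KP.
Variables (R : realType) (M : nat).

Definition xi (kappa : 'I_M -> R) (x y t : R) (j : 'I_M) : R :=
  kappa j * x + kappa j ^+ 2 * y + kappa j ^+ 3 * t.

(* E_I = prod_{a<b} (kappa_{i_b} - kappa_{i_a}) exp(sum_a xi_{i_a}),
   indices of I listed increasingly (columns are ordered as 'I_M). *)
Definition E_set (kappa : 'I_M -> R) (x y t : R) (I : {set 'I_M}) : R :=
  (\prod_(a in I) \prod_(b in I | (a < b)%N) (kappa b - kappa a))
  * expR (\sum_(a in I) xi kappa x y t a).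

Variable N : nat.

Definition rref_pivots (A : 'M[R]_(N, M)) (p : 'I_N -> 'I_M) : Prop :=
  [/\ forall k k' : 'I_N, (k < k')%N -> (p k < p k')%N,
      forall k : 'I_N, A k (p k) = 1,
      forall k k' : 'I_N, k' != k -> A k' (p k) = 0
    & forall (k : 'I_N) (j : 'I_M), (j < p k)%N -> A k j = 0].

Definition pivot_set (p : 'I_N -> 'I_M) : {set 'I_M} := p @: [set: 'I_N].

Definition phi (kappa : 'I_M -> R) (x y t : R) (p : 'I_N -> 'I_M)
  (k : 'I_N) (j : 'I_M) : R := xi kappa x y t j - xi kappa x y t (p k).

Definition exp_phi0 (kappa : 'I_M -> R) (A : 'M[R]_(N, M)) (p : 'I_N -> 'I_M)
  (k : 'I_N) (j : 'I_M) : R :=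
  `|A k j| * (\prod_(m : 'I_N | m != k) `|kappa (p m) - kappa j|)
  / (\prod_(m : 'I_N | m != k) `|kappa (p m) - kappa (p k)|).

Definition tphi (kappa : 'I_M -> R) (x y t : R) (A : 'M[R]_(N, M))
  (p : 'I_N -> 'I_M) (k : 'I_N) (j : 'I_M) : R :=
  phi kappa x y t p k j + ln (exp_phi0 kappa A p k j).

End KP.

From HB Require Import structures.
From mathcomp Require Import all_boot all_order all_algebra.
From mathcomp Require Import all_classical all_reals all_analysis.
From mathcomp Require Import ring.
Import Order.TTheory GRing.Theory Num.Theory.
Local Open Scope ring_scope.

(* Write E_X = V(X) prod_(a in X) e^(xi_a), where V(X) is the product of
   |kappa_a - kappa_b| over the unordered pairs of X (positive since kappa is
   increasing).  With K the pivots kept, P = {i_(k_r)} the pivots removed and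
   Q = {j_r} the columns added, I0 = K + P and J = K + Q, and
   V(K + X) = V(K) V(X) prod_(K x X) |kappa_a - kappa_b|.  The factor V(K)
   cancels in E_J / E_I0; the cross terms with K are those occurring in the
   products over m <> k_r defining e^(phi0); the rest is V(P), V(Q) and the
   mixed factors |kappa_(i_(k_r)) - kappa_(j_r')|, r <> r', which recombine
   into prod_(r < r') |C_(r,r')|. *)

Lemma big_setU_disjoint (T : Type) (idx : T) (op : Monoid.com_law idx)
    (I : finType) (A B : {set I}) (F : I -> T) :
  [disjoint A & B] ->
  \big[op/idx]_(i in A :|: B) F i
  = op (\big[op/idx]_(i in A) F i) (\big[op/idx]_(i in B) F i).
Proof. by move=> dAB; rewrite -bigU //; apply: eq_bigl => i; rewrite !inE. Qed.

Lemma big_imset_inj (T : Type) (idx : T) (op : Monoid.com_law idx)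
    (I J : finType) (h : I -> J) (F : J -> T) :
  injective h ->
  \big[op/idx]_(b in [set h a | a : I]) F b = \big[op/idx]_a F (h a).
Proof. by move=> h_inj; rewrite big_imset => [|u v _ _ /h_inj]. Qed.

Section PairProducts.
Variables (R : comRingType) (m : nat).
Implicit Types (G H : 'I_m -> 'I_m -> R) (P : pred 'I_m) (S X : {set 'I_m}).

Lemma prod_neq_pairs P H :
  \prod_(a | P a) \prod_(b | P b && (b != a)) H a b
  = \prod_(a | P a) \prod_(b | P b && (a < b)%N) (H a b * H b a).
Proof.
transitivity (\prod_(a | P a) (\prod_(b | P b && (a < b)%N) H a b
                              * \prod_(b | P b && (b < a)%N) H a b)).
  apply: eq_bigr => a _; rewrite (bigID (fun b : 'I_m => (a < b)%N)) /=.
  by congr (_ * _); apply: eq_bigl => b; rewrite -(inj_eq val_inj) /=;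
    case: ltngtP; rewrite ?andbT ?andbF.
under [RHS]eq_bigr do rewrite big_split.
rewrite !big_split /=; congr (_ * _).
rewrite (exchange_big_dep P) /=; last by move=> a b _ /andP[].
by apply: eq_bigr => b Pb; apply: eq_bigl => a; rewrite Pb.
Qed.

Lemma prod_lt_pairs_sqr P G : (forall a b, G a b = G b a) ->
  (\prod_(a | P a) \prod_(b | P b && (a < b)%N) G a b) ^+ 2
  = \prod_(a | P a) \prod_(b | P b && (b != a)) G a b.
Proof.
move=> symG; rewrite prod_neq_pairs -prodrXl; apply: eq_bigr => a _.
by rewrite -prodrXl; apply: eq_bigr => b _; rewrite [G b a]symG expr2.
Qed.

Definition pairprod G X := \prod_(a in X) \prod_(b in X | (a < b)%N) G a b.

Lemma pairprod_setU G S X : (forall a b, G a b = G b a) -> [disjoint S & X] ->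
  pairprod G (S :|: X)
  = pairprod G S * pairprod G X * \prod_(a in S) \prod_(b in X) G a b.
Proof.
move=> symG dSX; rewrite /pairprod.
under eq_bigr do rewrite big_mkcondr big_setU_disjoint // -!big_mkcondr.
rewrite big_setU_disjoint //= !big_split /=.
have cross : \prod_(a in S) \prod_(b in X | (a < b)%N) G a b
             * \prod_(a in X) \prod_(b in S | (a < b)%N) G a b
             = \prod_(a in S) \prod_(b in X) G a b.
  rewrite [Q in _ * Q](exchange_big_dep (mem S)) /=; last first.
    by move=> a b _ /andP[].
  rewrite -big_split; apply: eq_bigr => a aS.
  rewrite [RHS](bigID (fun b : 'I_m => (a < b)%N)) /=; congr (_ * _).
  apply: eq_big => [b|b _]; last exact: symG.
  case bX: (b \in X) => //=; rewrite aS -leqNgt [RHS]leq_eqVlt.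
  suff -> : (val b == val a) = false by [].
  by apply/negbTE/eqP => /val_inj eba; rewrite eba (disjointFr dSX aS) in bX.
by rewrite -cross; ring.
Qed.

End PairProducts.

Arguments pairprod {R m}.

(* The order of the pairs changes under [g]; squaring identifies both sides
   with the product over all ordered pairs of distinct indices. *)
Lemma pairprod_imset (R : numDomainType) (m n : nat) (G : 'I_m -> 'I_m -> R)
    (g : 'I_n -> 'I_m) :
  (forall a b, 0 <= G a b) -> (forall a b, G a b = G b a) -> injective g ->
  pairprod G [set g r | r : 'I_n]
  = \prod_(r : 'I_n) \prod_(r' : 'I_n | (r < r')%N) G (g r) (g r').
Proof.
move=> G_ge0 symG g_inj; apply/eqP.
rewrite -(eqrXn2 (ltn0Sn 1)); last 2 first.
- by apply: prodr_ge0 => a _; apply: prodr_ge0.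
- by apply: prodr_ge0 => a _; apply: prodr_ge0.
have /= -> := prod_lt_pairs_sqr _ _ predT _ (fun r r' => symG (g r) (g r')).
rewrite /pairprod prod_lt_pairs_sqr // big_imset_inj //.
apply/eqP/eq_bigr => r _.
rewrite big_mkcondr big_imset_inj // [RHS]big_mkcond; apply: eq_bigr => r' _.
by rewrite (inj_eq g_inj).
Qed.

Lemma ord_inc_inj {a b : nat} {f : 'I_a -> 'I_b} :
  (forall u v : 'I_a, (u < v)%N -> (f u < f v)%N) -> injective f.
Proof.
move=> f_inc u v fuv; apply: val_inj.
by case: (ltngtP u v) => // /f_inc; rewrite fuv ltnn.
Qed.

Section PivotExchange.
Variables (R : realType) (M N n : nat) (kappa : 'I_M -> R).
Variables (p : 'I_N -> 'I_M) (k : 'I_n -> 'I_N) (j : 'I_n -> 'I_M).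
Hypotheses (kappa_inc : forall a b : 'I_M, (a < b)%N -> kappa a < kappa b)
  (p_inj : injective p) (k_inj : injective k) (j_inj : injective j)
  (j_notin : forall r, j r \notin pivot_set p).

Definition kdist (a b : 'I_M) : R := `|kappa a - kappa b|.

Lemma kdist_sym a b : kdist a b = kdist b a.
Proof. exact: distrC. Qed.

Lemma kdist_ge0 a b : 0 <= kdist a b.
Proof. exact: normr_ge0. Qed.

Lemma kdist_gt0 a b : a != b -> 0 < kdist a b.
Proof.
rewrite normr_gt0 subr_eq0 -(inj_eq val_inj) /=.
by case: (ltngtP a b) => // /kappa_inc; [move/lt_eqF -> | move/gt_eqF ->].
Qed.

Lemma pairprod_kdist_gt0 X : 0 < pairprod kdist X.
Proof.
apply: prodr_gt0 => a _; apply: prodr_gt0 => b /andP[_ ab].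
by apply: kdist_gt0; rewrite -(inj_eq val_inj) /= ltn_eqF.
Qed.

Lemma E_set_pairprod x y t X :
  E_set kappa x y t X
  = pairprod kdist X * \prod_(a in X) expR (xi kappa x y t a).
Proof.
rewrite /E_set expR_sum; congr (_ * _); apply: eq_bigr => a _.
apply: eq_bigr => b /andP[_ ab].
by rewrite /kdist distrC ger0_norm // subr_ge0 ltW // kappa_inc.
Qed.

Local Notation I0 := (pivot_set p).
Local Notation Iout := [set p (k r) | r : 'I_n].
Local Notation Iin := [set j r | r : 'I_n].
Local Notation Ikeep := (I0 :\: Iout).

Lemma pk_inj : injective (fun r => p (k r)).
Proof. by move=> r r' /p_inj /k_inj. Qed.

Lemma pivot_set_keep_out : I0 = Ikeep :|: Iout.
Proof.
apply/setP => a; rewrite !inE.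
case: (boolP (a \in Iout)) => [/imsetP[r _ ->]|_] /=; last by rewrite orbF.
by apply/imsetP; exists (k r).
Qed.

Lemma disjoint_keep_out : [disjoint Ikeep & Iout].
Proof.
rewrite finset.disjoints_subset; apply/fintype.subsetP => a.
by rewrite !inE => /andP[].
Qed.

Lemma disjoint_keep_in : [disjoint Ikeep & Iin].
Proof.
rewrite finset.disjoints_subset; apply/fintype.subsetP => a.
rewrite !inE => /andP[_ aI0].
by apply/imsetP => -[r _ ar]; move: (j_notin r); rewrite -ar aI0.
Qed.

Lemma prod_other_pivots (F : 'I_M -> R) r :
  \prod_(m | m != k r) F (p m)
  = \prod_(a in Ikeep) F a * \prod_(r' | r' != r) F (p (k r')).
Proof.
transitivity (\prod_(a in I0 | a != p (k r)) F a).
  rewrite big_mkcondr big_imset => [|u v _ _ /p_inj //].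
  rewrite big_mkcond [RHS]big_mkcond; apply: eq_bigr => m _.
  by rewrite inE (inj_eq p_inj).
rewrite big_mkcondr {1}pivot_set_keep_out.
rewrite big_setU_disjoint ?disjoint_keep_out //=.
congr (_ * _).
  apply: eq_bigr => a; rewrite !inE => /andP[aout _]; case: eqP => // ar.
  by move: aout; rewrite ar; case/imsetP; exists r.
rewrite big_imset_inj; last exact: pk_inj.
by rewrite [RHS]big_mkcond; apply: eq_bigr => r' _; rewrite (inj_eq pk_inj).
Qed.

Definition phi0_num r := \prod_(m | m != k r) kdist (p m) (j r).
Definition phi0_den r := \prod_(m | m != k r) kdist (p m) (p (k r)).

Lemma prod_phi0_num :
  \prod_r phi0_num r
  = \prod_(a in Ikeep) \prod_r kdist a (j r)
    * \prod_r \prod_(r' | r' != r) kdist (p (k r)) (j r').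
Proof.
under eq_bigr => r _ do rewrite /phi0_num (prod_other_pivots (kdist^~ (j r))).
rewrite big_split /= [in RHS]exchange_big; congr (_ * _).
rewrite (exchange_big_dep predT) //=; apply: eq_bigr => r _.
by apply: eq_bigl => r'; rewrite eq_sym.
Qed.

Lemma prod_phi0_den :
  \prod_r phi0_den r
  = \prod_(a in Ikeep) \prod_r kdist a (p (k r)) * pairprod kdist Iout ^+ 2.
Proof.
under eq_bigr => r _ do
  rewrite /phi0_den (prod_other_pivots (kdist^~ (p (k r)))).
rewrite big_split /= [in RHS]exchange_big; congr (_ * _).
rewrite pairprod_imset //; [|exact: kdist_ge0|exact: kdist_sym|exact: pk_inj].
have /= -> := prod_lt_pairs_sqr _ _ predT _
  (fun r r' => kdist_sym (p (k r)) (p (k r'))).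
by apply: eq_bigr => r _; apply: eq_bigr => r' _; rewrite kdist_sym.
Qed.

Definition cross_ratio (r r' : 'I_n) : R :=
  ((kappa (p (k r)) - kappa (p (k r'))) * (kappa (j r) - kappa (j r')))
  / ((kappa (p (k r)) - kappa (j r')) * (kappa (j r) - kappa (p (k r')))).

Lemma pivot_neq_col r r' : p (k r) != j r'.
Proof.
by apply: contraNneq (j_notin r') => <-; apply/imsetP; exists (k r).
Qed.

Lemma norm_prod_cross_ratio :
  `|\prod_(r < n) \prod_(r' < n | (r < r')%N) cross_ratio r r'|
    * \prod_r \prod_(r' | r' != r) kdist (p (k r)) (j r')
  = pairprod kdist Iout * pairprod kdist Iin.
Proof.
have /= -> := prod_neq_pairs _ _ predT (fun r r' => kdist (p (k r)) (j r')).
rewrite !pairprod_imset //; try exact: kdist_ge0; try exact: kdist_sym;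
  try exact: pk_inj.
rewrite normr_prod -!big_split; apply: eq_bigr => r _.
rewrite normr_prod -!big_split; apply: eq_bigr => r' _ /=.
rewrite /cross_ratio normf_div !normrM (kdist_sym (p (k r'))) divfK //.
by rewrite mulf_neq0 // lt0r_neq0 // kdist_gt0 // ?pivot_neq_col // eq_sym
  pivot_neq_col.
Qed.

Lemma pairprod_exchange :
  pairprod kdist (Ikeep :|: Iin) / pairprod kdist I0
  = `|\prod_(r < n) \prod_(r' < n | (r < r')%N) cross_ratio r r'|
    * (\prod_r phi0_num r / \prod_r phi0_den r).
Proof.
set Z := \prod_r \prod_(r' | r' != r) kdist (p (k r)) (j r').
have Z_gt0 : 0 < Z.
  by do 2!apply: prodr_gt0 => ? _; apply/kdist_gt0/pivot_neq_col.
have keep_out_gt0 : 0 < \prod_(a in Ikeep) \prod_r kdist a (p (k r)).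
  apply: prodr_gt0 => a; rewrite !inE => /andP[a_out _].
  apply: prodr_gt0 => r _; apply: kdist_gt0; apply: contraNneq a_out => ->.
  by apply/imsetP; exists r.
rewrite {2}pivot_set_keep_out.
rewrite !pairprod_setU ?disjoint_keep_in ?disjoint_keep_out //;
  try exact: kdist_sym.
have cross_imset (g : 'I_n -> 'I_M) : injective g ->
    \prod_(a in Ikeep) \prod_(b in [set g r | r : 'I_n]) kdist a b
    = \prod_(a in Ikeep) \prod_r kdist a (g r).
  by move=> g_inj; apply: eq_bigr => a _; rewrite big_imset_inj.
rewrite !cross_imset //; last exact: pk_inj.
rewrite prod_phi0_num prod_phi0_den -/Z.
rewrite -[X in X * (_ / _)](mulfK (lt0r_neq0 Z_gt0)) norm_prod_cross_ratio.
have keep_neq0 := lt0r_neq0 (pairprod_kdist_gt0 Ikeep).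
have out_neq0 := lt0r_neq0 (pairprod_kdist_gt0 Iout).
by field; rewrite out_neq0 keep_neq0 !lt0r_neq0.
Qed.

Lemma E_set_exchange x y t :
  E_set kappa x y t (Ikeep :|: Iin) / E_set kappa x y t I0
  = pairprod kdist (Ikeep :|: Iin) / pairprod kdist I0
    * \prod_r expR (phi kappa x y t p (k r) (j r)).
Proof.
rewrite !E_set_pairprod [in X in _ / (_ * X)]pivot_set_keep_out.
rewrite !big_setU_disjoint ?disjoint_keep_in ?disjoint_keep_out //=.
rewrite !big_imset_inj //; last exact: pk_inj.
rewrite /phi; under [in RHS]eq_bigr do rewrite expRB.
rewrite prodf_div.
have prod_expR_neq0 (I : finType) (P : pred I) (F : I -> R) :
  \prod_(i | P i) expR (F i) != 0.
  by apply/lt0r_neq0/prodr_gt0 => *; exact: expR_gt0.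
have I0_neq0 := lt0r_neq0 (pairprod_kdist_gt0 I0).
by field; rewrite I0_neq0 !prod_expR_neq0.
Qed.

Lemma exp_phi0_gt0 (A : 'M[R]_(N, M)) k0 j0 :
  A k0 j0 != 0 -> j0 \notin I0 -> 0 < exp_phi0 kappa A p k0 j0.
Proof.
move=> A_nz j0_notin; apply: divr_gt0; first apply: mulr_gt0.
- by rewrite normr_gt0.
- apply: prodr_gt0 => m _; apply: kdist_gt0.
  by apply: contraNneq j0_notin => <-; apply/imsetP; exists m.
- by apply: prodr_gt0 => m m_k0; apply: kdist_gt0; rewrite (inj_eq p_inj).
Qed.

Lemma exp_phi0_split (A : 'M[R]_(N, M)) r :
  exp_phi0 kappa A p (k r) (j r) = `|A (k r) (j r)| * (phi0_num r / phi0_den r).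
Proof. by rewrite /exp_phi0 mulrA. Qed.

Lemma expR_tphi x y t (A : 'M[R]_(N, M)) k0 j0 :
  0 < exp_phi0 kappa A p k0 j0 ->
  expR (tphi kappa x y t A p k0 j0)
  = expR (phi kappa x y t p k0 j0) * exp_phi0 kappa A p k0 j0.
Proof. by move=> phi0_gt0; rewrite /tphi expRD lnK. Qed.

End PivotExchange.

Arguments cross_ratio {R M N n}.

Theorem mainTheorem6 (R : realType) (M N : nat) (kappa : 'I_M -> R)
  (x y t : R) (A : 'M[R]_(N, M)) (p : 'I_N -> 'I_M) (n : nat)
  (k : 'I_n -> 'I_N) (j : 'I_n -> 'I_M) :
  (forall a b : 'I_M, (a < b)%N -> kappa a < kappa b) ->
  rref_pivots A p ->
  (1 <= n)%N -> (n <= N)%N ->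
  injective k -> injective j ->
  (forall r : 'I_n, j r \notin pivot_set p) ->
  (forall r : 'I_n, A (k r) (j r) != 0) ->
  let I0 := pivot_set p in
  let J := (I0 :\: [set p (k r) | r : 'I_n]) :|: [set j r | r : 'I_n] in
  let C (r r' : 'I_n) :=
    ((kappa (p (k r)) - kappa (p (k r'))) * (kappa (j r) - kappa (j r')))
    / ((kappa (p (k r)) - kappa (j r')) * (kappa (j r) - kappa (p (k r')))) in
  `|\prod_(r < n) A (k r) (j r)| * (E_set kappa x y t J / E_set kappa x y t I0)
  = `|\prod_(r < n) \prod_(r' < n | (r < r')%N) C r r'|
    * expR (\sum_(r < n) tphi kappa x y t A p (k r) (j r)).
Proof.
move=> kappa_inc [p_inc _ _ _] _ _ k_inj j_inj j_notin A_nz I0 J C.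
have p_inj := ord_inc_inj p_inc.
have -> : C = cross_ratio kappa p k j by [].
rewrite /J /I0 E_set_exchange // pairprod_exchange // expR_sum.
under [X in _ = _ * X]eq_bigr => r _ do
  rewrite expR_tphi ?exp_phi0_gt0 // exp_phi0_split.
by rewrite !big_split /= normr_prod prodfV; ring.
Qed.
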